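(* In the two-door cascading memoryless semi-fractional setting, let $\pi^\star$ be an optimal semi-fractional sequence, and let $\theta=-c\log(q_1)/p_2$ and $\psi=\frac12\big(\sqrt{\theta^2+4\theta}-\theta\big)$ (natural logarithms). Then $$\mathbb{E}[\pi^\star]\in\frac{1}{\log(1/q_1)}\left(\log\frac{1}{1-\psi}+\frac{\theta}{\psi}+1\right)-\left[0,\frac{p_2}{\log(1/q_1)}\right],$$ where $a-[0,b]$ denotes the interval $[a-b,a]$.
   Context: Two cascading memoryless doors with durations: parameters $p_1,p_2\in(0,1)$, $q_1=1-p_1$, $q_2=1-p_2$, and $c>0$. Both doors start closed. A semi-fractional sequence is an infinite alternating sequence of knocks $1^{t_1}\,2\,1^{t_2}\,2\cdots$ with real $t_j\ge0$. A 1-knock $1^t$ takes $t$ time units and, if door 1 is closed, opens it with probability $1-q_1^t$, independently of everything else. A 2-knock takes $c$ time units and opens door 2 with probability $p_2$ (independently) if door 1 is open at that time, and with probability $0$ otherwise. There is no feedback. The running time is the time at which both doors are open, and $\mathbb{E}[\pi]$ is its expectation for sequence $\pi$; $\pi^\star$ is optimal if $\mathbb{E}[\pi^\star]\le\mathbb{E}[\pi]$ for all semi-fractional $\pi$. *)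

From HB Require Import structures.
From mathcomp Require Import all_boot all_order all_algebra.
From mathcomp Require Import all_classical all_reals.
From mathcomp Require Import ereal topology normedtype sequences exp.
Set Implicit Arguments. Unset Strict Implicit. Unset Printing Implicit Defensive.
Import Order.TTheory GRing.Theory Num.Theory.
Local Open Scope ring_scope.

Section TwoDoors.
Variable R : realType.

(* A semi-fractional sequence 1^{t_1} 2 1^{t_2} 2 ... is encoded by
   t : nat -> R, with t k = t_{k+1}; it must satisfy t k >= 0. *)
Definition semifrac (t : nat -> R) : Prop := forall k, 0 <= t k.

(* Distribution of the state of the doors after the first k phases
   (a phase being 1^{t_j} followed by a 2-knock):
   first component  = P(door 1 closed),
   second component = P(door 1 open and door 2 closed).
   In phase k+1 the 1-knock of length t k opens a closed door 1 with
   probability 1 - q1^(t k); then the 2-knock opens door 2 with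
   probability p2 iff door 1 is open. *)
Fixpoint door_state (p1 p2 : R) (t : nat -> R) (k : nat) : R * R :=
  match k with
  | 0 => (1, 0)
  | k'.+1 =>
      let ab := door_state p1 p2 t k' in
      let r := (1 - p1) `^ (t k') in
      (ab.1 * r, (1 - p2) * (ab.2 + ab.1 * (1 - r)))
  end.

Definition not_done (p1 p2 : R) (t : nat -> R) (k : nat) : R :=
  (door_state p1 p2 t k).1 + (door_state p1 p2 t k).2.

(* Expected running time (possibly +oo): tail-sum formula
   E[T] = sum_k (duration of phase k+1) * P(T > end of phase k),
   phase k+1 lasting t k + c time units. *)
Definition exp_time (p1 p2 c : R) (t : nat -> R) : \bar R :=
  (\sum_(0 <= k <oo) ((t k + c) * not_done p1 p2 t k)%:E)%E.

Definition optimal (p1 p2 c : R) (t : nat -> R) : Prop :=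
  semifrac t /\
  forall t' : nat -> R, semifrac t' -> (exp_time p1 p2 c t <= exp_time p1 p2 c t')%E.

End TwoDoors.

From HB Require Import structures.
From mathcomp Require Import all_boot all_order all_algebra.
From mathcomp Require Import all_classical all_reals.
From mathcomp Require Import ereal topology normedtype sequences exp.
From mathcomp.algebra_tactics Require Import ring lra.
Set Implicit Arguments. Unset Strict Implicit. Unset Printing Implicit Defensive.
Import Order.TTheory GRing.Theory Num.Theory.
Local Open Scope ring_scope.

(* Let lam = ln (1/q1), s = 1 - psi, and let D_k, N_k be the probabilities that
   after k phases door 1 is still closed, resp. not both doors are open.

   Lower bound: the potential N (theta + K + ln (D/N)), with
   K = ln (1/s) + psi + 1 - p2, drops by at most lam (t_k + c) N_k during phase
   k, whatever t_k is (tangent-line bounds for ln, then a perfect square).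
   Telescoping gives lam E_n >= (theta + K) (1 - N_n) for the cost E_n of the
   first n phases, while E_n >= c n N_n since N is nonincreasing; together
   they force lam E >= theta + K = lam (a - b).

   Upper bound: E[pi*] is at most the cost of the sequence which first knocks
   door 1 for time ln (1/s) / lam, so that D_1 = s, and then repeats 1^tau 2
   with tau = p2 psi / lam.  For such a stationary tail, alpha N + beta D with
   alpha = (tau + c) / p2 and beta = (tau + c) q1^tau / (1 - q1^tau) is the
   exact cost-to-go; evaluating it with exp x >= 1 + x gives at most a. *)

Section RealFacts.
Variable R : realType.
Implicit Types x s u : R.

Lemma ln_le_subr1 x : 0 < x -> ln x <= x - 1.
Proof.
by move=> x0; have := @le_ln1Dx R (x - 1); rewrite addrCA subrr addr0; apply; lra.
Qed.

Lemma ln_le_tangent x s : 0 < x -> 0 < s -> ln x <= ln s + x / s - 1.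
Proof.
move=> x0 s0; have := @ln_le_subr1 (x / s) (divr_gt0 x0 s0).
by rewrite ln_div ?posrE //; lra.
Qed.

Lemma powRE x s : 0 < x -> x `^ s = expR (s * ln x).
Proof. by move=> x0; rewrite /powR gt_eqF. Qed.

Lemma mul_expRN_div_le1 u : 0 < u -> u * (expR (- u) / (1 - expR (- u))) <= 1.
Proof.
move=> u0; have e0 := expR_gt0 (- u).
have e1 : expR (- u) * (1 + u) <= 1.
  by rewrite expRN mulrC -/(_ / _) ler_pdivrMr ?expR_gt0 // mul1r expR_ge1Dx.
by rewrite mulrA ler_pdivrMr; nra.
Qed.

Lemma quadratic_root_in01 (theta : R) : 0 < theta ->
  let psi := (Num.sqrt (theta ^+ 2 + 4 * theta) - theta) / 2 in
  [/\ 0 < psi, psi < 1 & psi ^+ 2 + theta * psi = theta].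
Proof.
move=> th0 /=; set S := Num.sqrt _.
have S0 : 0 <= S by exact: sqrtr_ge0.
have S2 : S ^+ 2 = theta ^+ 2 + 4 * theta by rewrite sqr_sqrtr //; nra.
have S_gt : theta < S by nra.
have S_lt : S < theta + 2 by nra.
split; [lra | lra | apply/eqP; rewrite -subr_eq0; apply/eqP].
transitivity ((S ^+ 2 - (theta ^+ 2 + 4 * theta)) / 4); first by field.
by rewrite S2 subrr mul0r.
Qed.

End RealFacts.

Definition potential (R : realType) (p s D N : R) : R :=
  N * ((1 - s) ^+ 2 / s - ln s + (1 - s) + 1 - p + ln (D / N)).

Lemma potential_drop1_le (R : realType) (p s w : R) :
  0 <= p -> p <= 1 -> 0 < s -> 0 < w -> w <= 1 ->
  p * (1 - w) * ((1 - s) ^+ 2 / s - ln s + (1 - s) + 1 - p + ln w)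
    + (1 - p + p * w) * ln (1 - p + p * w)
  <= p * ((1 - s) ^+ 2 / s).
Proof.
move=> p0 p1 s0 w0 w1; set z := 1 - p + p * w.
have z0 : 0 < z by rewrite /z; nra.
have zlnz : z * ln z <= z * (z - 1) by rewrite ler_wpM2l ?ln_le_subr1 // ltW.
have lnw : p * (1 - w) * ln w <= p * (1 - w) * (ln s + w / s - 1).
  by rewrite ler_wpM2l ?ln_le_tangent //; nra.
have gap : p * (1 - w) * ((1 - s) ^+ 2 / s - ln s + (1 - s) + 1 - p
                          + (ln s + w / s - 1)) + z * (z - 1) - p * ((1 - s) ^+ 2 / s)
           = - p * ((s - w) ^+ 2 / s + p * w * (1 - w)).
  by rewrite /z; field; exact: lt0r_neq0.
have gap_le0 : 0 <= p * ((s - w) ^+ 2 / s + p * w * (1 - w)).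
  have pw : 0 <= p * w * (1 - w) by rewrite !mulr_ge0 ?subr_ge0 // ltW.
  by rewrite mulr_ge0 ?addr_ge0 ?divr_ge0 ?sqr_ge0 // ltW.
lra.
Qed.

Lemma potential_drop_le (R : realType) (p s D N r : R) :
  0 <= p -> p <= 1 -> 0 < s -> 0 < D -> D <= N -> 0 < r -> r <= 1 ->
  potential p s D N - potential p s (D * r) ((1 - p) * N + p * (D * r))
  <= (p * ((1 - s) ^+ 2 / s) - ln r) * N.
Proof.
move=> p0 p1 s0 D0 DN r0 r1.
have N0 : 0 < N := lt_le_trans D0 DN.
set w := D * r / N.
have w0 : 0 < w by rewrite divr_gt0 ?mulr_gt0.
have w1 : w <= 1 by rewrite ler_pdivrMr // mul1r; nra.
have := potential_drop1_le p0 p1 s0 w0 w1.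
set z := 1 - p + p * w => drop1.
have z0 : 0 < z by rewrite /z; nra.
have next_N : (1 - p) * N + p * (D * r) = z * N.
  by rewrite /z /w; field; exact: lt0r_neq0.
have ln_ratio : ln (D / N) = ln w - ln r.
  by rewrite -ln_div ?posrE // /w; congr ln; field; apply/andP; split; exact: lt0r_neq0.
have ln_next : ln (D * r / (z * N)) = ln w - ln z.
  by rewrite -ln_div ?posrE // /w; congr ln; field; apply/andP; split; exact: lt0r_neq0.
rewrite /potential next_N ln_ratio ln_next.
have := ler_wpM2l (ltW N0) drop1.
rewrite /z; lra.
Qed.

Lemma nneseries_ge_of_two_bounds (R : realType) (u x : R ^nat) (M a : R) :
  (forall k, 0 <= u k) -> 0 < M -> 0 < a ->
  (forall n, M * (1 - x n) <= \sum_(0 <= k < n) u k) ->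
  (forall n, a * n%:R * x n <= \sum_(0 <= k < n) u k) ->
  (M%:E <= \sum_(0 <= k <oo) (u k)%:E)%E.
Proof.
move=> u0 M0 a0 hM ha; apply/lee_addgt0Pr => e e0.
set n := (Num.truncn (M ^+ 2 / (a * e))).+1.
have hn : M ^+ 2 <= a * n%:R * e.
  have := truncnS_gt (M ^+ 2 / (a * e)); rewrite -/n.
  by rewrite ltr_pdivrMr ?mulr_gt0 // mulrCA mulrA => /ltW.
have n0 : 0 <= a * n%:R by rewrite mulr_ge0 ?ltW.
set S := \sum_(0 <= k < n) u k.
(* the convex combination of the two bounds with weights [a n] and [M] eliminates [x n] *)
have mix : M * (a * n%:R) <= (M + a * n%:R) * S.
  by have := hM n; have := ha n; rewrite -/S; nra.
apply: le_trans (_ : (S + e)%:E <= _)%E; first by rewrite lee_fin; nra.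
rewrite EFinD leeD2r // /S -sumEFin; apply: nneseries_lim_ge => k _ _; exact: u0.
Qed.

Section Doors.
Variables (R : realType) (p1 p2 : R) (t : nat -> R).
Hypotheses (p1_gt0 : 0 < p1) (p1_lt1 : p1 < 1) (p2_gt0 : 0 < p2) (p2_lt1 : p2 < 1).
Hypothesis ht : semifrac t.

Local Notation D k := (door_state p1 p2 t k).1.
Local Notation N k := (not_done p1 p2 t k).
Local Notation r k := ((1 - p1) `^ (t k)).

Lemma ln_q1_lt0 : ln (1 - p1) < 0.
Proof. by rewrite ln_lt0 // subr_gt0 p1_lt1 gtrBl p1_gt0. Qed.

Lemma knock_factor_gt0 k : 0 < r k.
Proof. by rewrite powR_gt0 // subr_gt0. Qed.

Lemma knock_factor_le1 k : r k <= 1.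
Proof.
by rewrite powRE ?subr_gt0 // expR_le1 mulr_ge0_le0 // ln_le0 // gerBl ltW.
Qed.

Lemma door_closed_gt0 k : 0 < D k.
Proof.
by elim: k => [|k IH] /=; [exact: ltr01 | rewrite mulr_gt0 ?knock_factor_gt0].
Qed.

Lemma door_closed_le_not_done k : D k <= N k.
Proof.
suff : 0 <= (door_state p1 p2 t k).2 by rewrite /not_done; lra.
elim: k => [|k IH] //=; apply: mulr_ge0; first by rewrite subr_ge0 ltW.
by rewrite addr_ge0 // mulr_ge0 ?subr_ge0 ?knock_factor_le1 // ltW // door_closed_gt0.
Qed.

Lemma not_done_gt0 k : 0 < N k.
Proof. exact: lt_le_trans (door_closed_gt0 k) (door_closed_le_not_done k). Qed.

Lemma phase_cost_ge0 c k : 0 <= c -> 0 <= (t k + c) * N k.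
Proof.
by move=> c0; apply: mulr_ge0; [rewrite addr_ge0 ?(ht k) | rewrite ltW ?not_done_gt0].
Qed.

Lemma not_done_succ k : N k.+1 = (1 - p2) * N k + p2 * (D k * r k).
Proof. by rewrite /not_done /=; ring. Qed.

Lemma not_done_nonincreasing : nonincreasing_seq (not_done p1 p2 t).
Proof.
apply/nonincreasing_seqP => k; rewrite not_done_succ.
have Dr : D k * r k <= N k.
  apply: le_trans (door_closed_le_not_done k).
  by rewrite ler_piMr ?knock_factor_le1 // ltW // door_closed_gt0.
by move: p2_gt0 Dr; nra.
Qed.

Lemma sum_not_done_ge n : n%:R * N n <= \sum_(0 <= k < n) N k.
Proof.
rewrite mulr_natl -[n in _ *+ n]subn0 -sumr_const_nat.
by apply: ler_sum_nat => k /andP[_ /ltnW]; exact: not_done_nonincreasing.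
Qed.

Section LowerBound.
Variables (c s : R).
Hypotheses (s_gt0 : 0 < s) (s_lt1 : s < 1).
Hypothesis hlc : - ln (1 - p1) * c = p2 * ((1 - s) ^+ 2 / s).

Local Notation Phi k := (potential p2 s (D k) (N k)).
Local Notation theta := ((1 - s) ^+ 2 / s).
Local Notation K := (- ln s + (1 - s) + 1 - p2).

Lemma potential_door_le n : Phi n <= (theta + K) * N n.
Proof.
have : ln (D n / N n) <= 0.
  by rewrite ln_le0 // ler_pdivrMr ?not_done_gt0 // mul1r door_closed_le_not_done.
rewrite /potential; have := not_done_gt0 n; nra.
Qed.

Lemma potential_door_drop k :
  Phi k - Phi k.+1 <= - ln (1 - p1) * ((t k + c) * N k).
Proof.
have := potential_drop_le (ltW p2_gt0) (ltW p2_lt1) s_gt0 (door_closed_gt0 k)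
  (door_closed_le_not_done k) (knock_factor_gt0 k) (knock_factor_le1 k).
by rewrite -not_done_succ ln_powR -hlc; lra.
Qed.

Lemma sum_cost_ge n :
  (theta + K) * (1 - N n) <= - ln (1 - p1) * \sum_(0 <= k < n) (t k + c) * N k.
Proof.
have Phi0 : Phi 0 = theta + K.
  by rewrite /potential /not_done /= !addr0 divr1 ln1 addr0 mul1r; ring.
have tel : \sum_(0 <= k < n) (Phi k - Phi k.+1) = Phi 0 - Phi n.
  rewrite (@telescope_sumr_eq _ 0 n (fun k => - Phi k)) // => [|k _];
    by rewrite opprK addrC.
have drop : Phi 0 - Phi n <= - ln (1 - p1) * \sum_(0 <= k < n) (t k + c) * N k.
  rewrite -tel mulr_sumr; apply: ler_sum_nat => k _; exact: potential_door_drop.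
by have := potential_door_le n; rewrite Phi0 in drop; lra.
Qed.

Lemma exp_time_ge : (((theta + K) / - ln (1 - p1))%:E <= exp_time p1 p2 c t)%E.
Proof.
have lam_gt0 : 0 < - ln (1 - p1) by rewrite oppr_gt0 ln_q1_lt0.
have theta_gt0 : 0 < theta by rewrite divr_gt0 // exprn_gt0 // subr_gt0.
have c_gt0 : 0 < c by rewrite -(pmulr_rgt0 _ lam_gt0) hlc mulr_gt0.
have ln_s_lt0 : ln s < 0 by rewrite ln_lt0 // s_gt0 s_lt1.
have K_gt0 : 0 < K by move: p2_lt1 s_lt1; lra.
apply: (nneseries_ge_of_two_bounds (x := not_done p1 p2 t)).
- by move=> k; rewrite phase_cost_ge0 // ltW.
- by rewrite divr_gt0 // addr_gt0.
- exact: c_gt0.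
- by move=> n; rewrite mulrAC ler_pdivrMr // [X in _ <= X]mulrC sum_cost_ge.
- move=> n; rewrite -mulrA; apply: le_trans (ler_wpM2l (ltW c_gt0) (sum_not_done_ge n)) _.
  rewrite mulr_sumr; apply: ler_sum_nat => k _.
  by apply: ler_wpM2r; [exact/ltW/not_done_gt0 | rewrite lerDr; exact: ht].
Qed.

End LowerBound.

Section Stationary.
Variables (c tau : R).
Hypotheses (hc : 0 <= c) (htau : 0 < tau) (tail : forall k, (0 < k)%N -> t k = tau).

Local Notation rho := ((1 - p1) `^ tau).
Local Notation alpha := ((tau + c) / p2).
Local Notation beta := ((tau + c) * rho / (1 - rho)).

Lemma rho_lt1 : rho < 1.
Proof. by rewrite powRE ?subr_gt0 // expR_lt1 pmulr_rlt0 // ln_q1_lt0. Qed.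

Lemma cost_to_go_step k : (0 < k)%N ->
  (t k + c) * N k + (alpha * N k.+1 + beta * D k.+1) = alpha * N k + beta * D k.
Proof.
move=> k_gt0; rewrite not_done_succ [D k.+1]/= tail //.
have rho_neq1 : 1 - rho != 0 by rewrite subr_eq0 eq_sym lt_eqF // rho_lt1.
by field; rewrite rho_neq1 lt0r_neq0.
Qed.

Lemma exp_time_stationary_le :
  (exp_time p1 p2 c t <= (t 0 + c + (alpha * N 1 + beta * D 1))%:E)%E.
Proof.
have tau_c_ge0 : 0 <= tau + c by rewrite addr_ge0 // ltW.
have alpha_ge0 : 0 <= alpha := divr_ge0 tau_c_ge0 (ltW p2_gt0).
have beta_ge0 : 0 <= beta.
  apply: divr_ge0; first exact: mulr_ge0 tau_c_ge0 (powR_ge0 _ _).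
  by rewrite subr_ge0 ltW // rho_lt1.
have V_ge0 n : 0 <= alpha * N n + beta * D n.
  by apply: addr_ge0; apply: mulr_ge0 => //; apply: ltW;
    [exact: not_done_gt0 | exact: door_closed_gt0].
have partial n : \sum_(0 <= k < n.+1) (t k + c) * N k + (alpha * N n.+1 + beta * D n.+1)
               = t 0 + c + (alpha * N 1 + beta * D 1).
  elim: n => [|n IH]; first by rewrite big_nat1 /not_done /= addr0 mulr1.
  by rewrite big_nat_recr //= -addrA cost_to_go_step.
rewrite /exp_time; apply: lime_le.
  by apply: is_cvg_nneseries => k _ _; rewrite lee_fin phase_cost_ge0.
apply: nearW => -[|n]; rewrite sumEFin lee_fin.
  by rewrite big_geq // addr_ge0 ?V_ge0 // addr_ge0 // (ht 0).
by rewrite -(partial n) lerDl.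
Qed.

End Stationary.

End Doors.

Section Bounds.
Variables (R : realType) (p1 p2 c psi : R).
Hypotheses (p1_gt0 : 0 < p1) (p1_lt1 : p1 < 1) (p2_gt0 : 0 < p2) (p2_lt1 : p2 < 1).
Hypotheses (c_gt0 : 0 < c) (psi_gt0 : 0 < psi) (psi_lt1 : psi < 1).
Local Notation lam := (- ln (1 - p1)).
Local Notation theta := (- c * ln (1 - p1) / p2).
Hypothesis psi_root : psi ^+ 2 + theta * psi = theta.

Let p2_neq0 : p2 != 0 := lt0r_neq0 p2_gt0.
Let psi_neq0 : psi != 0 := lt0r_neq0 psi_gt0.
Let one_sub_psi_neq0 : 1 - psi != 0. Proof. by rewrite subr_eq0 eq_sym lt_eqF. Qed.
Let ln_q1_neq0 : ln (1 - p1) != 0 := ltr0_neq0 (ln_q1_lt0 p1_gt0 p1_lt1).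

Lemma lam_gt0 : 0 < lam.
Proof. by rewrite oppr_gt0 ln_q1_lt0. Qed.

Lemma ln_inv_q1 : ln (1 / (1 - p1)) = lam.
Proof. by rewrite div1r lnV // posrE subr_gt0. Qed.

Lemma theta_div_psi : theta / psi = psi + theta.
Proof. by rewrite -[in LHS]psi_root; field; rewrite p2_neq0 psi_neq0. Qed.

Lemma theta_psiE : theta = psi ^+ 2 / (1 - psi).
Proof.
have : theta * (1 - psi) = psi ^+ 2 by rewrite mulrBr mulr1 -{1}psi_root; ring.
by move<-; field; rewrite p2_neq0 one_sub_psi_neq0.
Qed.

Lemma exp_time_ge_psi t : semifrac t ->
  (((ln (1 / (1 - psi)) + theta / psi + 1 - p2) / ln (1 / (1 - p1)))%:E
    <= exp_time p1 p2 c t)%E.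
Proof.
move=> ht; have s_gt0 : 0 < 1 - psi by rewrite subr_gt0.
have s_lt1 : 1 - psi < 1 by rewrite gtrBl.
have hlc : lam * c = p2 * ((1 - (1 - psi)) ^+ 2 / (1 - psi)).
  by rewrite subKr -theta_psiE; field; rewrite p2_neq0.
apply: le_trans (exp_time_ge p1_gt0 p1_lt1 p2_gt0 p2_lt1 ht s_gt0 s_lt1 hlc).
rewrite lee_fin ln_inv_q1 ler_pM2r ?invr_gt0 ?lam_gt0 //.
by rewrite div1r lnV ?posrE // theta_div_psi theta_psiE subKr; lra.
Qed.

Lemma exp_time_le_psi : exists2 t, semifrac t &
  (exp_time p1 p2 c t
     <= ((ln (1 / (1 - psi)) + theta / psi + 1) / ln (1 / (1 - p1)))%:E)%E.
Proof.
set x := - ln (1 - psi) / lam; set tau := p2 * psi / lam.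
have tau_gt0 : 0 < tau by rewrite divr_gt0 ?mulr_gt0 ?lam_gt0.
have x_ge0 : 0 <= x.
  by rewrite divr_ge0 ?oppr_ge0 ?ln_le0 ?gerBl ?ltW ?lam_gt0.
pose t k := if k is 0 then x else tau.
have ht : semifrac t by case => [|k] //; exact: ltW.
exists t => //.
have tail k : (0 < k)%N -> t k = tau by case: k.
apply: le_trans
  (exp_time_stationary_le p1_gt0 p1_lt1 p2_gt0 p2_lt1 ht (ltW c_gt0) tau_gt0 tail) _.
have q1_x : (1 - p1) `^ x = 1 - psi.
  rewrite powRE ?subr_gt0 // (_ : x * _ = ln (1 - psi)) ?lnK ?posrE ?subr_gt0 //.
  by rewrite /x; field.
set rho := expR (- (p2 * psi)).
have q1_tau : (1 - p1) `^ tau = rho by rewrite powRE ?subr_gt0 // /tau; congr expR; field.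
have rho_lt1 : rho < 1 by rewrite expR_lt1 oppr_lt0 mulr_gt0.
have rho_neq1 : 1 - rho != 0 by rewrite subr_eq0 eq_sym lt_eqF.
have tail_cost := mul_expRN_div_le1 (mulr_gt0 p2_gt0 psi_gt0).
rewrite -/rho in tail_cost.
rewrite lee_fin /t /not_done /= q1_x q1_tau ln_inv_q1 theta_div_psi.
rewrite div1r lnV ?posrE ?subr_gt0 //.
rewrite -(ler_pM2l lam_gt0) [lam * (_ / lam)]mulrC divfK ?lt0r_neq0 ?lam_gt0 //.
have -> : lam * (x + c + ((tau + c) / p2
                             * (1 * (1 - psi) + (1 - p2) * (0 + 1 * (1 - (1 - psi))))
                           + (tau + c) * rho / (1 - rho) * (1 * (1 - psi))))
        = - ln (1 - psi) + psi + theta + p2 * psi * (rho / (1 - rho))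
          - p2 * (1 + rho / (1 - rho)) * (psi ^+ 2 + theta * psi - theta).
  by rewrite /x /tau; field; rewrite p2_neq0 rho_neq1 ln_q1_neq0.
by rewrite psi_root subrr mulr0 subr0; lra.
Qed.

End Bounds.

Theorem mainTheorem15 (R : realType) (p1 p2 c : R)
  (hp1 : 0 < p1 < 1) (hp2 : 0 < p2 < 1) (hc : 0 < c)
  (tstar : nat -> R) (hopt : optimal p1 p2 c tstar) :
  let q1 := 1 - p1 in
  let theta := - c * ln q1 / p2 in
  let psi := (Num.sqrt (theta ^+ 2 + 4 * theta) - theta) / 2 in
  let a := (ln (1 / (1 - psi)) + theta / psi + 1) / ln (1 / q1) in
  let b := p2 / ln (1 / q1) in
  ((a - b)%:E <= exp_time p1 p2 c tstar)%E /\ (exp_time p1 p2 c tstar <= a%:E)%E.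
Proof.
move=> q1 theta psi a b.
have [[p1_gt0 p1_lt1] [p2_gt0 p2_lt1]] := (andP hp1, andP hp2).
have theta_gt0 : 0 < theta.
  rewrite /theta mulNr -mulrN divr_gt0 ?mulr_gt0 // oppr_gt0 ln_lt0 // /q1.
  by apply/andP; split; lra.
have [psi_gt0 psi_lt1 psi_root] := quadratic_root_in01 theta_gt0.
have [ht_star t_star_min] := hopt.
split.
- rewrite /a /b -mulrBl.
  exact (exp_time_ge_psi p1_gt0 p1_lt1 p2_gt0 p2_lt1 psi_gt0 psi_lt1 psi_root ht_star).
- have [t ht le_t] :=
    exp_time_le_psi p1_gt0 p1_lt1 p2_gt0 p2_lt1 hc psi_gt0 psi_lt1 psi_root.
  exact: le_trans (t_star_min t ht) le_t.
Qed.
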